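(* Let $\mathbb{S}=(S,\Sigma,\{\tau_a\mid a\in L\})$ be an LMP, let $\Sigma_0\subseteq\Sigma$ be a sub-$\sigma$-algebra with $\mathcal{R}(\Sigma_0)=\mathcal{R}^T(\Sigma_0)$, and put $R_0=\mathcal{R}(\Sigma_0)$. Then for every limit ordinal $\lambda$, $\mathcal{R}(\Sigma_\lambda)=\mathcal{R}^T(\Sigma_\lambda)$.
   Context: An LMP is a triple $(S,\Sigma,\{\tau_a\mid a\in L\})$ with $(S,\Sigma)$ a measurable space, $L$ countable, and each $\tau_a:S\times\Sigma\to[0,1]$ a Markov kernel (subprobability measure in the second argument, measurable in the first). For $R\subseteq S\times S$, $A$ is $R$-closed if $x\in A$, $xRs$ imply $s\in A$; $\Sigma(R)$ is the family of $R$-closed members of $\Sigma$. For $\Gamma\subseteq\mathcal{P}(S)$, $\mathcal{R}(\Gamma)=\{(s,t):\forall A\in\Gamma\,(s\in A\iff t\in A)\}$; for $\Lambda\subseteq\Sigma$, $\mathcal{R}^T(\Lambda)=\{(s,t):\forall a\in L\,\forall E\in\Lambda\ \tau_a(s,E)=\tau_a(t,E)\}$. $\mathcal{O}(R)=\mathcal{R}^T(\Sigma(R))$, $\mathcal{G}(\Lambda)=\Sigma(\mathcal{R}^T(\Lambda))$. Iterates: $R_{\alpha+1}=\mathcal{O}(R_\alpha)$, $R_\lambda=\bigcap_{\alpha<\lambda}R_\alpha$ for limit $\lambda$; $\Sigma_{\alpha+1}=\mathcal{G}(\Sigma_\alpha)$, $\Sigma_\lambda=\sigma(\bigcup_{\alpha<\lambda}\Sigma_\alpha)$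 for limit $\lambda$. *)

From HB Require Import structures.
From mathcomp Require Import all_boot all_order all_algebra.
From mathcomp Require Import all_classical all_reals all_analysis.
From Stdlib Require Import Relations Wellfounded.
Set Implicit Arguments. Unset Strict Implicit. Unset Printing Implicit Defensive.
Import Order.TTheory GRing.Theory Num.Theory.
Local Open Scope classical_set_scope.
Local Open Scope ring_scope.

(* An LMP on a measurable space T with countable label set L:
   a family of subprobability (Markov) kernels tau a : T ~> T. *)
Definition LMP (d : measure_display) (T : measurableType d) (R : realType)
  (L : countType) := L -> R.-spker T ~> T.

Definition rel_closed (T : Type) (Rel : T -> T -> Prop) (A : set T) : Prop :=
  forall x s, A x -> Rel x s -> A s.

Definition closed_measurables d (T : measurableType d) (Rel : T -> T -> Prop)
  : set (set T) := [set A | measurable A /\ rel_closed Rel A].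

Definition relR (T : Type) (Gamma : set (set T)) : T -> T -> Prop :=
  fun s t => forall A, Gamma A -> (A s <-> A t).

Definition relRT d (T : measurableType d) (R : realType) (L : countType)
  (tau : LMP T R L) (Lambda : set (set T)) : T -> T -> Prop :=
  fun s t => forall a E, Lambda E -> tau a s E = tau a t E.

Definition opG d (T : measurableType d) (R : realType) (L : countType)
  (tau : LMP T R L) (Lambda : set (set T)) : set (set T) :=
  closed_measurables (relRT tau Lambda).

(* Ordinals are represented by elements of an arbitrary strict well-order. *)
Definition strict_wellorder (W : Type) (lt : W -> W -> Prop) : Prop :=
  (forall x y z, lt x y -> lt y z -> lt x z) /\
  (forall x y, lt x y \/ x = y \/ lt y x) /\
  well_founded lt.

Definition is_zero (W : Type) (lt : W -> W -> Prop) (w : W) : Prop :=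
  forall v, ~ lt v w.

Definition is_succ_of (W : Type) (lt : W -> W -> Prop) (v w : W) : Prop :=
  lt v w /\ forall u, ~ (lt v u /\ lt u w).

Definition is_limit (W : Type) (lt : W -> W -> Prop) (w : W) : Prop :=
  ~ is_zero lt w /\ forall v, ~ is_succ_of lt v w.

Definition sigma_hierarchy d (T : measurableType d) (R : realType)
  (L : countType) (tau : LMP T R L) (Sigma0 : set (set T))
  (W : Type) (lt : W -> W -> Prop) (Sig : W -> set (set T)) : Prop :=
  (forall w, is_zero lt w -> Sig w = Sigma0) /\
  (forall v w, is_succ_of lt v w -> Sig w = opG tau (Sig v)) /\
  (forall w, is_limit lt w ->
     Sig w = <<s \bigcup_(v in [set v | lt v w]) Sig v >>).

From HB Require Import structures.
From mathcomp Require Import all_boot all_order all_algebra.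
From mathcomp Require Import all_classical all_reals all_analysis.
Local Open Scope classical_set_scope.

(* The inclusion R^T(Sigma_lam) <= R(Sigma_lam) is an invariant of the whole
   hierarchy: every Sigma_w is a sigma-algebra of measurable sets, the stages
   increase, and every member of Sigma_w is closed under R^T(Sigma_w).

   For R(Sigma_lam) <= R^T(Sigma_lam), let s, t be separated by no set of
   Sigma_lam.  For A in Sigma_v (v < lam) the level set
   {x | tau_a x A = tau_a s A} lies in G(Sigma_v) = Sigma_(v+1) <= Sigma_lam,
   so tau_a s and tau_a t agree on the union of the Sigma_v, v < lam.  That
   union is a chain of sigma-algebras, hence a pi-system containing the whole
   space, so by uniqueness of finite measures the two kernels agree on the
   sigma-algebra it generates, which is Sigma_lam. *)

Section ClosedSets.
Context {T : Type}.

(* For a symmetric relation, the Rel-closed sets form a sigma-algebra: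
   closedness under complement is where symmetry is needed. *)
Lemma closed_sets_sigma_algebra {Rel : T -> T -> Prop} :
  (forall s t, Rel s t -> Rel t s) ->
  sigma_algebra setT [set A | rel_closed Rel A].
Proof.
move=> Rsym; split.
- by move=> x s.
- move=> A Aclosed x s [_ nAx] xs; split => // As.
  exact/nAx/(Aclosed s x As (Rsym _ _ xs)).
- move=> F Fclosed x s [n _ Fnx] xs.
  by exists n => //; exact: Fclosed n x s Fnx xs.
Qed.

End ClosedSets.

Section LMPRelations.
Context {d : measure_display} {T : measurableType d} {R : realType}
  {L : countType} {tau : LMP T R L}.

Lemma relRT_sym {Lambda : set (set T)} {s t} :
  relRT tau Lambda s t -> relRT tau Lambda t s.
Proof. by move=> h a E /h ->. Qed.

Lemma relRT_antitone {A B : set (set T)} {s t} :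
  A `<=` B -> relRT tau B s t -> relRT tau A s t.
Proof. by move=> AB h a E /AB; exact: h. Qed.

Lemma opG_sigma_algebra (Lambda : set (set T)) :
  sigma_algebra setT (opG tau Lambda).
Proof.
have [closedT closedC closedU] :=
  closed_sets_sigma_algebra (@relRT_sym Lambda).
split.
- by split => //; exact: closedT.
- by move=> B [mB cB]; split; [exact: measurableD | exact: closedC].
- move=> F GF; split.
    by apply: bigcup_measurable => n _; case: (GF n).
  by apply: closedU => n; case: (GF n).
Qed.

Lemma opG_measurable (Lambda : set (set T)) : opG tau Lambda `<=` measurable.
Proof. by move=> B []. Qed.

Lemma relRT_sub_relR {Lambda : set (set T)} :
  (forall A, Lambda A -> rel_closed (relRT tau Lambda) A) ->
  forall s t, relRT tau Lambda s t -> relR Lambda s t.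
Proof.
move=> Lclosed s t st A LA; split => [As|At].
  exact: (Lclosed _ LA s t As st).
exact: (Lclosed _ LA t s At (relRT_sym st)).
Qed.

(* The level sets of a kernel evaluated at a set of Lambda belong to G(Lambda);
   this is what makes the successor stage separate states with different
   transition probabilities. *)
Lemma kernel_level_set_opG {Lambda : set (set T)} {a A} s :
  Lambda A -> measurable A ->
  opG tau Lambda [set x | tau a x A = tau a s A].
Proof.
move=> LA mA; split.
  have := measurable_kernel (tau a) A mA measurableT [set tau a s A].
  by rewrite setTI; apply.
by move=> x y /= <- xy; apply/esym; exact: xy.
Qed.

(* Agreement of all kernels on a pi-system of measurable sets containing the
   whole space extends to the generated sigma-algebra (uniqueness of finite
   measures). *)
Lemma relRT_generated {G : set (set T)} {s t} :
  G `<=` measurable -> G setT -> setI_closed G ->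
  relRT tau G s t -> relRT tau <<s G >> s t.
Proof.
move=> Gm GT GI st a E GE.
refine (@g_sigma_algebra_measure_unique d R T G Gm (fun=> setT) (fun=> GT) _
  (tau a s) (tau a t) GI _ _ E GE).
- by rewrite bigcup_const.
- by move=> A GA; exact: st.
- move=> _; apply: (Order.POrderTheory.le_lt_trans (sprob_kernel_le1 _ _)).
  exact: ltey.
Qed.

End LMPRelations.

Section Ordinals.
Context {W : Type} {lt : W -> W -> Prop}.
Hypothesis hW : strict_wellorder lt.

Lemma wf_minimal (P : W -> Prop) x :
  P x -> exists m, P m /\ forall y, lt y m -> ~ P y.
Proof.
have [_ [_ lt_wf]] := hW.
induction x as [x IH] using (well_founded_ind lt_wf) => Px.
have [[y [yx Py]]|noP] := pselect (exists y, lt y x /\ P y).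
  exact: IH yx Py.
by exists x; split => // y yx Py; apply: noP; exists y.
Qed.

Lemma limit_has_smaller {lam : W} : is_limit lt lam -> exists v, lt v lam.
Proof.
move=> [nzero _]; apply: contrapT => none.
by apply: nzero => v vlam; apply: none; exists v.
Qed.

Lemma limit_succ_below {lam v : W} :
  is_limit lt lam -> lt v lam -> exists2 u, is_succ_of lt v u & lt u lam.
Proof.
have [lt_trans _] := hW.
move=> [_ nsucc] vlam.
have [u0 between] : exists u0, lt v u0 /\ lt u0 lam.
  apply: contrapT => none; apply: (nsucc v); split => // u vu.
  by apply: none; exists u.
have [u [[vu ulam] umin]] :=
  @wf_minimal (fun u => lt v u /\ lt u lam) u0 between.
exists u => //; split => // x [vx xu].
by apply: (umin x xu); split => //; exact: lt_trans ulam.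
Qed.

End Ordinals.

Section Hierarchy.
Context {d : measure_display} {T : measurableType d} {R : realType}
  {L : countType} {tau : LMP T R L} {Sigma0 : set (set T)}.
Hypotheses (hS0 : sigma_algebra setT Sigma0) (hS0sub : Sigma0 `<=` measurable)
  (hR0 : relR Sigma0 = relRT tau Sigma0).
Context {W : Type} {lt : W -> W -> Prop} {Sig : W -> set (set T)}.
Hypotheses (hW : strict_wellorder lt)
  (hSig : sigma_hierarchy tau Sigma0 lt Sig).

Definition stage_invariant (w : W) : Prop :=
  [/\ Sig w `<=` measurable, sigma_algebra setT (Sig w),
      (forall v, lt v w -> Sig v `<=` Sig w) &
      (forall A, Sig w A -> rel_closed (relRT tau (Sig w)) A)].

Lemma Sig_zero {w} : is_zero lt w -> Sig w = Sigma0.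
Proof. by case: hSig => + _; apply. Qed.

Lemma Sig_succ {v w} : is_succ_of lt v w -> Sig w = opG tau (Sig v).
Proof. by case: hSig => _ [+ _]; apply. Qed.

Lemma Sig_limit {w} : is_limit lt w ->
  Sig w = <<s \bigcup_(v in [set v | lt v w]) Sig v >>.
Proof. by case: hSig => _ [_]; apply. Qed.

Lemma limit_stage_sub {lam v : W} :
  is_limit lt lam -> lt v lam -> Sig v `<=` Sig lam.
Proof.
move=> lim vlam A SvA; rewrite (Sig_limit lim).
by apply: sub_gen_smallest; exists v.
Qed.

(* Stage 0: closedness is the hypothesis R(Sigma_0) = R^T(Sigma_0). *)
Lemma stage_invariant_zero (w : W) : is_zero lt w -> stage_invariant w.
Proof.
move=> zero; rewrite /stage_invariant (Sig_zero zero); split => //.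
- by move=> v /zero.
- by move=> A S0A x s Ax; rewrite -hR0 => /(_ A S0A) [/(_ Ax)].
Qed.

(* Successor stage: Sigma_v <= G(Sigma_v) = Sigma_(v+1), and G(Lambda) is closed
   under R^T(Lambda), hence under the finer R^T(Sigma_(v+1)). *)
Lemma stage_invariant_succ (v w : W) :
  is_succ_of lt v w -> stage_invariant v -> stage_invariant w.
Proof.
have [_ [lt_total _]] := hW.
move=> vw [Svm _ Svmono Svclosed].
have Sv_sub : Sig v `<=` opG tau (Sig v) by move=> A SvA; split; auto.
rewrite /stage_invariant (Sig_succ vw); split.
- exact: opG_measurable.
- exact: opG_sigma_algebra.
- move=> u uw; have [uv|[->//|vu]] := lt_total u v.
    by move=> A /(Svmono _ uv) /Sv_sub.
  by case: (vw.2 u).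
- move=> A [_ Aclosed] x s Ax xs; apply: (Aclosed x s Ax).
  exact: relRT_antitone Sv_sub xs.
Qed.

(* Limit stage: the R^T(Sigma_lam)-closed sets form a sigma-algebra containing
   every earlier stage, hence all of Sigma_lam. *)
Lemma stage_invariant_limit (lam : W) : is_limit lt lam ->
  (forall v, lt v lam -> stage_invariant v) -> stage_invariant lam.
Proof.
move=> lim IH.
have lam_sub v : lt v lam -> Sig v `<=` Sig lam := limit_stage_sub lim.
rewrite /stage_invariant; split => //.
- rewrite (Sig_limit lim).
  apply: smallest_sub; first exact: sigma_algebra_measurable.
  by move=> A [v vlam SvA]; have [Svm _ _ _] := IH v vlam; exact: Svm.
- by rewrite (Sig_limit lim); exact: smallest_sigma_algebra.
- have closed_sa := closed_sets_sigma_algebra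
    (fun s t => @relRT_sym _ _ _ _ tau (Sig lam) s t).
  move=> A; rewrite {1}(Sig_limit lim); apply: smallest_sub A => //.
  move=> B [v vlam SvB] x s Bx xs; have [_ _ _ Svclosed] := IH v vlam.
  exact: (Svclosed _ SvB x s Bx (relRT_antitone (lam_sub v vlam) xs)).
Qed.

Lemma stage_invariant_all (w : W) : stage_invariant w.
Proof.
have [_ [_ lt_wf]] := hW.
induction w as [w IH] using (well_founded_ind lt_wf).
have [zero|nzero] := pselect (is_zero lt w).
  exact: stage_invariant_zero.
have [[v vw]|nsucc] := pselect (exists v, is_succ_of lt v w).
  exact: stage_invariant_succ vw (IH v vw.1).
apply: stage_invariant_limit => //.
by split => // v vw; apply: nsucc; exists v.
Qed.

Lemma union_below_measurable (lam : W) :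
  \bigcup_(v in [set v | lt v lam]) Sig v `<=` measurable.
Proof.
by move=> A [v _ SvA]; have [Svm _ _ _] := stage_invariant_all v; exact: Svm.
Qed.

Lemma union_below_setT (lam : W) : is_limit lt lam ->
  (\bigcup_(v in [set v | lt v lam]) Sig v) setT.
Proof.
move=> lim; have [v vlam] := limit_has_smaller lim.
have [_ [Sv0 SvD _] _ _] := stage_invariant_all v.
by exists v => //; rewrite -(setD0 setT); exact: SvD Sv0.
Qed.

(* The union of the stages below any lam is a pi-system, being a chain of
   sigma-algebras. *)
Lemma union_below_setI_closed (lam : W) :
  setI_closed (\bigcup_(v in [set v | lt v lam]) Sig v).
Proof.
have [_ [lt_total _]] := hW.
have stage_setI w : setI_closed (Sig w).
  have [_ Ssa _ _] := stage_invariant_all w.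
  by have [_ _ _] := (sigma_algebraP (fun _ _ _ _ => I)).1 Ssa.
move=> A B [v vlam SvA] [w wlam SwB].
have [vw|[vw|wv]] := lt_total v w.
- exists w => //; have [_ _ mono _] := stage_invariant_all w.
  exact: stage_setI (mono _ vw _ SvA) SwB.
- by subst w; exists v => //; exact: stage_setI.
- exists v => //; have [_ _ mono _] := stage_invariant_all v.
  exact: stage_setI SvA (mono _ wv _ SwB).
Qed.

(* States not separated by Sigma_lam have the same transition probabilities on
   every earlier stage, since the relevant level sets lie in the next stage. *)
Lemma relR_limit_sub_relRT_union (lam : W) s t : is_limit lt lam ->
  relR (Sig lam) s t ->
  relRT tau (\bigcup_(v in [set v | lt v lam]) Sig v) s t.
Proof.
move=> lim st a A [v vlam SvA].
have [u vu ulam] := limit_succ_below hW lim vlam.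
have [Svm _ _ _] := stage_invariant_all v.
have Su_level : Sig u [set x | tau a x A = tau a s A].
  by rewrite (Sig_succ vu); exact: (kernel_level_set_opG s SvA (Svm _ SvA)).
have [level_s _] := st _ (limit_stage_sub lim ulam _ Su_level).
exact/esym/level_s.
Qed.

End Hierarchy.

Theorem proposition3p9 (d : measure_display) (T : measurableType d)
  (R : realType) (L : countType) (tau : LMP T R L)
  (Sigma0 : set (set T))
  (hS0 : sigma_algebra setT Sigma0)
  (hS0sub : Sigma0 `<=` measurable)
  (hR0 : relR Sigma0 = relRT tau Sigma0)
  (W : Type) (lt : W -> W -> Prop) (hW : strict_wellorder lt)
  (Sig : W -> set (set T)) (hSig : sigma_hierarchy tau Sigma0 lt Sig)
  (lam : W) (hlam : is_limit lt lam) :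
  relR (Sig lam) = relRT tau (Sig lam).
Proof.
have [_ _ _ lam_closed] := stage_invariant_all hS0 hS0sub hR0 hW hSig lam.
apply/funext => s; apply/funext => t; apply/propext; split; last first.
  exact: relRT_sub_relR lam_closed s t.
move=> st; rewrite (Sig_limit hSig hlam); apply: relRT_generated.
- exact: (union_below_measurable hS0 hS0sub hR0 hW hSig lam).
- exact: (union_below_setT hS0 hS0sub hR0 hW hSig lam hlam).
- exact: (union_below_setI_closed hS0 hS0sub hR0 hW hSig lam).
- exact: (relR_limit_sub_relRT_union hS0 hS0sub hR0 hW hSig lam s t hlam st).
Qed.
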